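(* Let $\mathcal{C}$ be a monopole and $x$ an object of $\mathcal{C}$. If $\mu_x:x\to y$ is a completion of $x$ in $\mathcal{C}$, then $y$ is complete in $\mathcal{C}$, i.e. $1_y:y\to y$ is a completion of $y$ in $\mathcal{C}$.
   Context: A refinement of a category is a subcategory containing all objects and all isomorphisms. A (positive) monopole is a category $\mathcal{C}$ with a distinguished refinement $\mathcal{C}_+$ whose arrows are called positive. For an object $x$, the co-slice $x\downarrow\mathcal{C}$ is the category whose objects are the positive arrows $f:x\to a$, with morphisms from $f:x\to a$ to $g:x\to b$ the arrows $\xi:a\to b$ of $\mathcal{C}$ with $\xi\circ f=g$. An object $z$ of a category is amphi-terminal if every object has at least one arrow to $z$ and $z$ has at most one arrow to any object. A completion of $x$ in $\mathcal{C}$ is an amphi-terminal object of $x\downarrow\mathcal{C}$; $x$ is complete in $\mathcal{C}$ if $1_x$ is a completion of $x$. *)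

From Stdlib Require Import ProofIrrelevance.
Set Implicit Arguments.

Record Category := {
  Ob :> Type;
  Hom : Ob -> Ob -> Type;
  idc : forall a, Hom a a;
  comp : forall a b c, Hom b c -> Hom a b -> Hom a c;
  comp_id_l : forall a b (f : Hom a b), comp (idc b) f = f;
  comp_id_r : forall a b (f : Hom a b), comp f (idc a) = f;
  comp_assoc : forall a b c d (f : Hom a b) (g : Hom b c) (h : Hom c d),
      comp h (comp g f) = comp (comp h g) f
}.

Arguments Hom {C} a b : rename.
Arguments idc {C} a : rename.
Arguments comp {C a b c} g f : rename.

Definition is_iso {C : Category} {a b : C} (f : Hom a b) : Prop :=
  exists g : Hom b a, comp g f = idc a /\ comp f g = idc b.

(* A monopole: a category with a distinguished refinement (subcategory
   containing all objects and all isomorphisms) of positive arrows. *)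
Record Monopole := {
  mcat :> Category;
  Pos : forall a b : mcat, Hom a b -> Prop;
  pos_comp : forall (a b c : mcat) (f : Hom a b) (g : Hom b c),
      Pos a b f -> Pos b c g -> Pos a c (comp g f);
  pos_iso : forall (a b : mcat) (f : Hom a b), @is_iso mcat a b f -> Pos a b f
}.

Arguments Pos {m a b} f : rename.

Lemma idc_is_iso (C : Category) (a : C) : is_iso (idc a).
Proof. exists (idc a); split; apply comp_id_l. Qed.

Definition pos_idc {C : Monopole} (a : C) : Pos (idc a) :=
  @pos_iso C a a (idc a) (@idc_is_iso C a).

Definition amphi_terminal (D : Category) (z : D) : Prop :=
  (forall w : D, exists _ : Hom w z, True) /\
  (forall w : D, forall u v : Hom z w, u = v).

(* The co-slice category x |v C: objects are positive arrows out of x,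
   morphisms are arbitrary arrows of C making the triangle commute. *)
Definition cs_ob {C : Monopole} (x : C) : Type :=
  { a : C & { f : Hom x a | Pos f } }.

Definition cs_tgt {C : Monopole} {x : C} (A : cs_ob x) : C := projT1 A.
Definition cs_arr {C : Monopole} {x : C} (A : cs_ob x) : Hom x (cs_tgt A) :=
  proj1_sig (projT2 A).

Definition cs_hom {C : Monopole} {x : C} (A B : cs_ob x) : Type :=
  { xi : Hom (cs_tgt A) (cs_tgt B) | comp xi (cs_arr A) = cs_arr B }.

Definition cs_id {C : Monopole} {x : C} (A : cs_ob x) : cs_hom A A :=
  exist _ (idc _) (comp_id_l _ _ _ (cs_arr A)).

Definition cs_comp {C : Monopole} {x : C} (A B D : cs_ob x)
  (g : cs_hom B D) (f : cs_hom A B) : cs_hom A D.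
Proof.
  exists (comp (proj1_sig g) (proj1_sig f)).
  rewrite <- comp_assoc, (proj2_sig f). exact (proj2_sig g).
Defined.

Lemma cs_hom_eq {C : Monopole} {x : C} (A B : cs_ob x) (f g : cs_hom A B) :
  proj1_sig f = proj1_sig g -> f = g.
Proof.
  destruct f as [f Hf], g as [g Hg]; simpl; intros ->.
  f_equal; apply proof_irrelevance.
Qed.

Definition coslice (C : Monopole) (x : C) : Category.
Proof.
  refine (@Build_Category (cs_ob x) (@cs_hom C x) (@cs_id C x) (@cs_comp C x)
            _ _ _); intros; apply cs_hom_eq; simpl.
  - apply comp_id_l.
  - apply comp_id_r.
  - apply comp_assoc.
Defined.

Definition cs_obj {C : Monopole} {x y : C} (mu : Hom x y) (Hmu : Pos mu)
  : Ob (coslice C x) :=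
  existT _ y (exist _ mu Hmu).
Arguments cs_obj {C x y} mu Hmu.

Definition completion (C : Monopole) (x : C) (A : Ob (coslice C x)) : Prop :=
  amphi_terminal (coslice C x) A.
Arguments completion : clear implicits.

Definition complete (C : Monopole) (x : C) : Prop :=
  completion C x (cs_obj (idc x) (pos_idc x)).
Arguments complete : clear implicits.


(* Composing with the completion [mu : x -> y] turns a positive [f : y -> a]
   into an object [f o mu] of [x |v C]; its arrow [xi] back to [mu] makes
   [xi o f] an endomorphism of [mu], which must be the identity.  So every
   positive arrow out of [y] is a split mono, which gives the arrows into
   [1_y]; arrows out of [1_y] are unique in any co-slice. *)

Lemma amphi_terminal_endo {D : Category} {z : D} :
  amphi_terminal D z -> forall u : Hom z z, u = idc z.
Proof. intros [_ Huniq] u; apply Huniq. Qed.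

Lemma cs_hom_from_idc_unique (C : Monopole) (y : C)
    (B : coslice C y) (u v : Hom (cs_obj (idc y) (pos_idc y)) B) : u = v.
Proof.
  apply cs_hom_eq.
  destruct u as [u Hu], v as [v Hv]; unfold cs_arr in Hu, Hv; simpl in *.
  rewrite comp_id_r in Hu, Hv; congruence.
Qed.

Lemma completion_pos_split_mono {C : Monopole} {x y : C} {mu : Hom x y}
    {Hmu : Pos mu} :
  completion C x (cs_obj mu Hmu) ->
  forall (a : C) (f : Hom y a), Pos f -> exists xi : Hom a y, comp xi f = idc y.
Proof.
  intros Hcompl a f Hf.
  destruct (proj1 Hcompl (cs_obj (comp f mu) (pos_comp _ _ _ _ _ _ Hmu Hf)))
    as [[xi Hxi] _].
  unfold cs_arr in Hxi; simpl in xi, Hxi.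
  assert (Hendo : comp (comp xi f) mu = mu) by (rewrite <- comp_assoc; exact Hxi).
  pose (e := exist (fun z : Hom y y => comp z mu = mu) (comp xi f) Hendo
             : Hom (C := coslice C x) (cs_obj mu Hmu) (cs_obj mu Hmu)).
  exists xi.
  exact (f_equal (@proj1_sig _ _) (amphi_terminal_endo Hcompl e)).
Qed.

Theorem mainTheorem4 (C : Monopole) (x y : C) (mu : Hom x y) (Hmu : Pos mu) :
  completion C x (cs_obj mu Hmu) -> complete C y.
Proof.
  intros Hcompl; split.
  - intros [a [f Hf]].
    destruct (completion_pos_split_mono Hcompl a f Hf) as [xi Hxi].
    exists (exist (fun z : Hom a y => comp z f = idc y) xi Hxi); exact I.
  - apply cs_hom_from_idc_unique.
Qed.
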